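(* For every formula $\phi\in\mathbf{LTL}(\mathbf{X},\wedge)$ there exists a pattern $P$ which is equivalent to $\phi$ (i.e. for every word $w$ and position $i$, $w,i\models P$ iff $w,i\models\phi$) and whose size is at most the size of $\phi$.
   Context: Alphabet $\Sigma=\{a,b\}$. Words are nonempty, indexed from position 1; $w(i)$ is the letter at position $i$. $\mathbf{LTL}(\mathbf{X},\wedge)$ consists of formulas built from atomic formulas $c\in\Sigma$, conjunction $\wedge$ and the next operator $\mathbf{X}$. Semantics on a word $w$ of length $\ell$, position $i\in[1,\ell]$: $w,i\models c$ iff $w(i)=c$; $w,i\models\phi_1\wedge\phi_2$ iff both hold; $w,i\models\mathbf{X}\phi$ iff $i<\ell$ and $w,i+1\models\phi$. The size of a formula is the number of nodes of its syntax tree; $\mathbf{X}^i$ denotes $i$ nested applications of $\mathbf{X}$ (each contributing 1 to the size). Patterns are the formulas generated by the grammar $P ::= \mathbf{X}^i c \mid \mathbf{X}^i(c\wedge P)$ with $i\ge 0$, $c\in\Sigma$. Equivalently a pattern has the form $\mathbf{X}^{i_1-1}(c_1\wedge\mathbf{X}^{i_2-i_1}(\cdots\wedge\mathbf{X}^{i_p-i_{p-1}}c_p)\cdots)$ with $1\le i_1<\dots<i_p$ and $c_q\in\Sigma$; it has size $i_p+2(p-1)$. (A formula such as $a\wedge b$ is also a pattern and is unsatisfiable.) *)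

From Stdlib Require Import List Arith Lia.
Import ListNotations.

Inductive letter : Type := La | Lb.

Inductive formula : Type :=
| Atom : letter -> formula
| And : formula -> formula -> formula
| Next : formula -> formula.

(* Words are lists of letters; positions are indexed from 1:
   w(i) = nth (i-1) w. *)
Definition letter_at (w : list letter) (i : nat) : option letter :=
  nth_error w (i - 1).

Fixpoint sat (w : list letter) (i : nat) (phi : formula) : Prop :=
  match phi with
  | Atom c => letter_at w i = Some c
  | And f g => sat w i f /\ sat w i g
  | Next f => i < length w /\ sat w (S i) f
  end.

Fixpoint size (phi : formula) : nat :=
  match phi with
  | Atom _ => 1
  | And f g => 1 + size f + size g
  | Next f => 1 + size f
  end.

Fixpoint nextn (i : nat) (phi : formula) : formula :=
  match i with
  | 0 => phi
  | S k => Next (nextn k phi)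
  end.

Inductive is_pattern : formula -> Prop :=
| pat_atom : forall i c, is_pattern (nextn i (Atom c))
| pat_and : forall i c P, is_pattern P -> is_pattern (nextn i (And (Atom c) P)).

Definition equiv (phi psi : formula) : Prop :=
  forall (w : list letter) (i : nat),
    w <> [] -> 1 <= i <= length w -> (sat w i phi <-> sat w i psi).

From Stdlib Require Import List Arith Lia Permutation.
Import ListNotations.

(* A formula phi is a conjunction of constraints "the letter at offset k is c".
   We collect them in the list [reqs phi] of pairs (k, c) and show that, at any
   position i >= 1, phi holds iff every constraint (k, c) holds at i + k
   ([sat_iff_reqs]); the conditions "i + k <= |w|" coming from X are implied by
   the letter constraints, since [reqs phi] is never empty.
   Conversely, from a list of constraints sorted by offset, [pattern_of] builds
   the pattern X^(k1) (c1 /\ X^(k2-k1) (c2 /\ ...)), which enforces exactly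
   these constraints ([sat_pattern_of]).  Applied to the sorted [reqs phi], this
   gives an equivalent pattern.  For the size: phi has 2 |reqs phi| - 1 nodes
   plus one X per nesting [nexts phi] bounding every offset ([size_reqs]),
   while the pattern uses 2 |reqs phi| - 1 nodes plus exactly the largest
   offset many X's ([size_pattern_of]). *)

Lemma letter_at_in_range w j c :
  1 <= j -> letter_at w j = Some c -> j <= length w.
Proof.
  unfold letter_at; intros Hj H.
  assert (j - 1 < length w) by (apply nth_error_Some; congruence).
  lia.
Qed.

Lemma sat_in_range phi : forall w j, 1 <= j -> sat w j phi -> j <= length w.
Proof.
  induction phi; simpl; intros w j Hj H.
  - eapply letter_at_in_range; eauto.
  - destruct H; eauto.
  - lia.
Qed.

Lemma size_nextn n phi : size (nextn n phi) = n + size phi.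
Proof. induction n; simpl; lia. Qed.

(* X^n phi holds at i iff phi holds n positions later (the bounds checks of
   the intermediate X's being implied by [sat_in_range]). *)
Lemma sat_nextn n phi : forall w i,
  1 <= i -> (sat w i (nextn n phi) <-> sat w (i + n) phi).
Proof.
  induction n; intros w i Hi; simpl.
  - rewrite Nat.add_0_r; tauto.
  - rewrite IHn by lia. replace (S i + n) with (i + S n) by lia.
    split; [tauto|]. intros H; split; [|exact H].
    apply sat_in_range in H; lia.
Qed.

Definition constraint := (nat * letter)%type.

Definition holds_at (w : list letter) (i : nat) (p : constraint) : Prop :=
  letter_at w (i + fst p) = Some (snd p).

Definition shift (p : constraint) : constraint := (S (fst p), snd p).

Fixpoint reqs (phi : formula) : list constraint :=
  match phi with
  | Atom c => [(0, c)]
  | And f g => reqs f ++ reqs g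
  | Next f => map shift (reqs f)
  end.

Fixpoint nexts (phi : formula) : nat :=
  match phi with
  | Atom _ => 0
  | And f g => nexts f + nexts g
  | Next f => S (nexts f)
  end.

Lemma reqs_nonempty phi : reqs phi <> [].
Proof.
  induction phi; simpl; try discriminate.
  - destruct (reqs phi1); simpl; [congruence|discriminate].
  - destruct (reqs phi); simpl; [congruence|discriminate].
Qed.

(* Size in terms of constraints: each atom counts one, each /\ joins two
   constraint lists, each X counts one. *)
Lemma size_reqs phi : size phi + 1 = 2 * length (reqs phi) + nexts phi.
Proof.
  induction phi; simpl; try lia.
  - rewrite length_app; lia.
  - rewrite length_map; lia.
Qed.

Lemma reqs_offset_bound phi : forall p, In p (reqs phi) -> fst p <= nexts phi.
Proof.
  induction phi; simpl; intros p H.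
  - destruct H as [<-|[]]; simpl; lia.
  - apply in_app_or in H; destruct H as [H|H];
      [specialize (IHphi1 p H)|specialize (IHphi2 p H)]; lia.
  - apply in_map_iff in H. destruct H as [q [<- Hq]]. simpl.
    specialize (IHphi q Hq); lia.
Qed.

Lemma sat_iff_reqs phi : forall w i, 1 <= i ->
  (sat w i phi <-> Forall (holds_at w i) (reqs phi)).
Proof.
  unfold holds_at.
  induction phi; simpl; intros w i Hi.
  - rewrite Forall_cons_iff, Nat.add_0_r. simpl. intuition.
  - rewrite IHphi1, IHphi2, Forall_app by exact Hi. tauto.
  - rewrite IHphi, Forall_map by lia.
    assert (Hshift : Forall (fun p => letter_at w (S i + fst p) = Some (snd p)) (reqs phi)
            <-> Forall (fun p => letter_at w (i + fst (shift p)) = Some (snd (shift p)))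
                       (reqs phi)).
    { split; apply Forall_impl; intros p; simpl;
        replace (i + S (fst p)) with (S i + fst p) by lia; auto. }
    rewrite <- Hshift. split; [tauto|]. intros H; split; [|exact H].
    destruct (reqs phi) as [|q r] eqn:E; [exfalso; exact (reqs_nonempty phi E)|].
    inversion H as [|? ? Hq _]; subst.
    apply letter_at_in_range in Hq; lia.
Qed.

Fixpoint sorted_from (b : nat) (l : list constraint) : Prop :=
  match l with
  | [] => True
  | q :: r => b <= fst q /\ sorted_from (fst q) r
  end.

Lemma sorted_from_lower_bound l : forall b,
  sorted_from b l -> forall p, In p l -> b <= fst p.
Proof.
  induction l as [|q r IH]; simpl; intros b H p Hp; [destruct Hp|].
  destruct Hp as [<-|Hp]; [tauto|]. specialize (IH _ (proj2 H) p Hp); lia.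
Qed.

Fixpoint insert (p : constraint) (l : list constraint) : list constraint :=
  match l with
  | [] => [p]
  | q :: r => if fst p <=? fst q then p :: q :: r else q :: insert p r
  end.

Definition sort_constraints (l : list constraint) : list constraint :=
  fold_right insert [] l.

Lemma insert_perm p l : Permutation (p :: l) (insert p l).
Proof.
  induction l as [|q r IH]; simpl; [reflexivity|].
  destruct (fst p <=? fst q); [reflexivity|].
  rewrite perm_swap. constructor. exact IH.
Qed.

Lemma insert_sorted p l : forall b,
  sorted_from b l -> b <= fst p -> sorted_from b (insert p l).
Proof.
  induction l as [|q r IH]; simpl; intros b H Hb; [auto|].
  destruct (fst p <=? fst q) eqn:E; simpl.
  - apply Nat.leb_le in E. tauto.
  - apply Nat.leb_gt in E. split; [tauto|]. apply IH; [tauto|lia].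
Qed.

Lemma sort_constraints_perm l : Permutation l (sort_constraints l).
Proof.
  induction l as [|p l IH]; simpl; [reflexivity|].
  eapply perm_trans; [apply perm_skip, IH|apply insert_perm].
Qed.

Lemma sort_constraints_sorted l : sorted_from 0 (sort_constraints l).
Proof. induction l; simpl; [exact I|]. apply insert_sorted; [assumption|lia]. Qed.

(* [pattern_of b l] enforces the constraints of l, with offsets measured from
   b, as a chain of X-blocks.  The empty list never occurs in use; it is sent
   to an arbitrary pattern. *)
Fixpoint pattern_of (b : nat) (l : list constraint) : formula :=
  match l with
  | [] => Atom La
  | q :: r =>
    match r with
    | [] => nextn (fst q - b) (Atom (snd q))
    | _ => nextn (fst q - b) (And (Atom (snd q)) (pattern_of (fst q) r))
    end
  end.

Lemma pattern_of_one b q : pattern_of b [q] = nextn (fst q - b) (Atom (snd q)).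
Proof. reflexivity. Qed.

Lemma pattern_of_cons b q q' r :
  pattern_of b (q :: q' :: r)
  = nextn (fst q - b) (And (Atom (snd q)) (pattern_of (fst q) (q' :: r))).
Proof. reflexivity. Qed.

Lemma pattern_of_is_pattern l : forall b, is_pattern (pattern_of b l).
Proof.
  induction l as [|q [|q' r] IH]; intros b.
  - exact (pat_atom 0 La).
  - apply pat_atom.
  - rewrite pattern_of_cons. apply pat_and, IH.
Qed.

Lemma sat_pattern_of l : forall b w i, 1 <= i -> l <> [] -> sorted_from b l ->
  (sat w i (pattern_of b l)
   <-> Forall (fun p => letter_at w (i + (fst p - b)) = Some (snd p)) l).
Proof.
  induction l as [|q [|q' r] IH]; intros b w i Hi Hne Hs; [congruence| |].
  - rewrite pattern_of_one, sat_nextn, Forall_cons_iff by exact Hi. simpl. intuition.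
  - destruct Hs as [Hb Hs].
    assert (Hge := sorted_from_lower_bound _ _ Hs).
    rewrite pattern_of_cons, sat_nextn by exact Hi. cbn [sat].
    rewrite IH, (Forall_cons_iff _ q) by (auto; try lia; discriminate).
    assert (Hrest : forall p, In p (q' :: r) ->
              i + (fst q - b) + (fst p - fst q) = i + (fst p - b))
      by (intros p Hp; specialize (Hge p Hp); lia).
    split; intros [Hq Hr]; split; try exact Hq;
      rewrite Forall_forall in *; intros p Hp; specialize (Hr p Hp);
      rewrite (Hrest p Hp) in *; exact Hr.
Qed.

(* The pattern has one node per constraint, one /\ between consecutive
   constraints, and as many X's as the largest offset M (counted from b). *)
Lemma size_pattern_of l : forall b M, l <> [] -> sorted_from b l ->
  (forall p, In p l -> fst p <= M) ->
  size (pattern_of b l) + b + 1 <= M + 2 * length l.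
Proof.
  induction l as [|q [|q' r] IH]; intros b M Hne Hs HM; [congruence| |];
    assert (Hq := HM q (or_introl eq_refl)); destruct Hs as [Hb Hs].
  - rewrite pattern_of_one, size_nextn. simpl. lia.
  - rewrite pattern_of_cons, size_nextn. cbn [size].
    assert (H := IH (fst q) M ltac:(discriminate) Hs (fun p Hp => HM p (or_intror Hp))).
    simpl length in *. lia.
Qed.

Theorem lemma1 : forall phi : formula,
  exists P : formula, is_pattern P /\ equiv P phi /\ size P <= size phi.
Proof.
  intros phi.
  set (l := sort_constraints (reqs phi)).
  assert (Hperm : Permutation (reqs phi) l) by apply sort_constraints_perm.
  assert (Hsorted : sorted_from 0 l) by apply sort_constraints_sorted.
  assert (Hne : l <> []).
  { intros E. rewrite E in Hperm.
    exact (reqs_nonempty phi (Permutation_nil (Permutation_sym Hperm))). }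
  exists (pattern_of 0 l). split; [apply pattern_of_is_pattern|split].
  - intros w i _ Hi.
    rewrite sat_pattern_of, sat_iff_reqs by (auto; lia).
    assert (Hsub0 : forall p : constraint, i + (fst p - 0) = i + fst p) by (intros; lia).
    split; intros H.
    + apply (Permutation_Forall (Permutation_sym Hperm)) in H.
      revert H; apply Forall_impl; intros p; unfold holds_at; rewrite Hsub0; auto.
    + apply (Permutation_Forall Hperm) in H.
      revert H; apply Forall_impl; intros p; unfold holds_at; rewrite Hsub0; auto.
  - assert (Hbound : forall p, In p l -> fst p <= nexts phi)
      by (intros p Hp; apply reqs_offset_bound, (Permutation_in _ (Permutation_sym Hperm) Hp)).
    assert (Hsize := size_pattern_of l 0 (nexts phi) Hne Hsorted Hbound).
    rewrite <- (Permutation_length Hperm) in Hsize.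
    assert (Hphi := size_reqs phi). lia.
Qed.
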